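(* Let $W,V$ be subspaces of $\mathbb{C}^n$ with $\mathbb{C}^n=W\oplus V^\perp$, let $\{\mathbf{w}_i\}_{i=1}^N$ be a frame for $W$ with frame operator $\mathbf{S}=\sum_{i=1}^N\mathbf{w}_i\mathbf{w}_i^*$, and let $\{\mathbf{v}_i\}_{i=1}^N$ be an oblique dual frame of $\{\mathbf{w}_i\}_{i=1}^N$ on $V$ such that $\langle\mathbf{w}_i,\mathbf{v}_i\rangle=\langle\mathbf{w}_j,\mathbf{v}_j\rangle$ for all $i,j$. Let $d_W=\dim W$. Then $$\max_{i\ne j}|\langle\mathbf{w}_i,\mathbf{v}_j\rangle|^2\ge\frac{d_W(N-d_W)}{N^2(N-1)}.$$ Furthermore, equality holds if and only if any of the following equivalent conditions holds: (1) $|\langle\mathbf{w}_i,\mathbf{v}_j\rangle|$ is constant over all $i\ne j$, and $\mathbf{v}_j=\boldsymbol{\pi}_{VW^\perp}\mathbf{S}^\dagger\mathbf{w}_j$ for each $j$; (2) the mixed Gram matrix $\mathbf{G}=(\langle\mathbf{w}_i,\mathbf{v}_j\rangle)_{ij}$ equals $\frac{d_W}{N}\left(\mathbf{Id}_{N\times N}+\sqrt{\frac{N-d_W}{d_W(N-1)}}\,\mathbf{Q}\right)$ for some generalized signature matrix $\mathbf{Q}$; (3) the vectors $\boldsymbol{\psi}_i:=\sqrt{N/d_W}\,(\mathbf{S}^\dagger)^{1/2}\mathbf{w}_i$, $i=1,\dots,N$, form an $(N,d_W)$-equiangular tight frame for $W$, and $\mathbf{v}_j=\boldsymbol{\pi}_{VW^\perp}\mathbf{S}^\dagger\mathbf{w}_j$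 for each $j$.
   Context: The inner product on $\mathbb{C}^n$ is $\langle\mathbf{x},\mathbf{y}\rangle=\mathbf{y}^*\mathbf{x}$. $\mathbf{S}^\dagger$ is the Moore–Penrose inverse and $(\mathbf{S}^\dagger)^{1/2}$ its positive semidefinite square root. When $\mathbb{C}^n=W\oplus V^\perp$ (equivalently $\mathbb{C}^n=V\oplus W^\perp$), $\boldsymbol{\pi}_{WV^\perp}$ is the oblique projection onto $W$ along $V^\perp$ and $\boldsymbol{\pi}_{VW^\perp}$ the oblique projection onto $V$ along $W^\perp$. A finite family in $W$ is a frame for $W$ if it spans $W$. A frame $\{\mathbf{v}_i\}_{i=1}^N\subset V$ for $V$ is an oblique dual frame of $\{\mathbf{w}_i\}$ on $V$ if $\boldsymbol{\pi}_{WV^\perp}\mathbf{f}=\sum_{i=1}^N\langle\mathbf{f},\mathbf{v}_i\rangle\mathbf{w}_i$ for all $\mathbf{f}\in\mathbb{C}^n$. A generalized signature matrix is a self-adjoint $N\times N$ matrix with zero diagonal and unimodular off-diagonal entries. A family of unit-norm vectors $\{\mathbf{f}_i\}_{i=1}^N$ in a $d$-dimensional space is an $(N,d)$-equiangular tight frame if it is a tight frame for that space and $|\langle\mathbf{f}_i,\mathbf{f}_j\rangle|^2$ is the same constant for all $i\ne j$. *)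

(* C^n is modelled by column vectors 'cV[C]_n; definitions are
   generic over a numClosedFieldType C, the theorem instantiates C := R[i]
   (the complex numbers over a realType R, i.e. over the reals). *)
From HB Require Import structures.
From mathcomp Require Import all_boot all_order all_algebra.
From mathcomp Require Import reals complex.
Set Implicit Arguments.
Unset Strict Implicit.
Unset Printing Implicit Defensive.
Import Order.TTheory GRing.Theory Num.Theory.
Local Open Scope ring_scope.

Section FrameDefs.
Variable C : numClosedFieldType.

Definition adjmx (m p : nat) (A : 'M[C]_(m, p)) : 'M[C]_(p, m) :=
  (map_mx Num.conj A)^T.

Definition dotv (n : nat) (x y : 'cV[C]_n) : C := (adjmx y *m x) 0 0.

(* A subspace U of C^n is represented by a square matrix whose row space is
   U^T; a column vector x belongs to U iff x^T lies in the row space. *)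
Definition inU (n : nat) (U : 'M[C]_n) (x : 'cV[C]_n) : Prop := (x^T <= U)%MS.

Definition inPerp (n : nat) (U : 'M[C]_n) (x : 'cV[C]_n) : Prop :=
  forall u, inU U u -> dotv x u = 0.

Definition direct_sum_perp (n : nat) (W V : 'M[C]_n) : Prop :=
  (forall x : 'cV[C]_n, exists w u, [/\ inU W w, inPerp V u & x = w + u]) /\
  (forall x : 'cV[C]_n, inU W x -> inPerp V x -> x = 0).

Definition oblique_proj (n : nat) (W V : 'M[C]_n) (P : 'M[C]_n) : Prop :=
  forall x : 'cV[C]_n, inU W (P *m x) /\ inPerp V (x - P *m x).

Definition is_frame (n N : nat) (U : 'M[C]_n) (f : 'I_N -> 'cV[C]_n) : Prop :=
  (\matrix_(i < N) (f i)^T == U)%MS.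

Definition frame_op (n N : nat) (f : 'I_N -> 'cV[C]_n) : 'M[C]_n :=
  \sum_(i < N) (f i *m adjmx (f i)).

Definition oblique_dual (n N : nat) (V P : 'M[C]_n) (w v : 'I_N -> 'cV[C]_n) : Prop :=
  is_frame V v /\
  forall f : 'cV[C]_n, P *m f = \sum_(i < N) dotv f (v i) *: w i.

Definition is_MP_inverse (n : nat) (A X : 'M[C]_n) : Prop :=
  [/\ A *m X *m A = A, X *m A *m X = X,
      adjmx (A *m X) = A *m X & adjmx (X *m A) = X *m A].

Definition is_psd (n : nat) (A : 'M[C]_n) : Prop :=
  adjmx A = A /\ forall x : 'cV[C]_n, 0 <= dotv (A *m x) x.

Definition gen_signature (N : nat) (Q : 'M[C]_N) : Prop :=
  [/\ adjmx Q = Q, forall i, Q i i = 0 & forall i j, i != j -> `|Q i j| = 1].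

Definition is_tight_frame (n N : nat) (U : 'M[C]_n) (f : 'I_N -> 'cV[C]_n) : Prop :=
  is_frame U f /\
  exists A : C, 0 < A /\
    forall x : 'cV[C]_n, inU U x ->
      \sum_(i < N) `|dotv x (f i)| ^+ 2 = A * dotv x x.

Definition is_ETF (n N d : nat) (U : 'M[C]_n) (f : 'I_N -> 'cV[C]_n) : Prop :=
  [/\ \rank U = d,
      (forall i, dotv (f i) (f i) = 1),
      is_tight_frame U f &
      exists c : C, forall i j, i != j -> `|dotv (f i) (f j)| ^+ 2 = c].

Definition mixed_gram (n N : nat) (w v : 'I_N -> 'cV[C]_n) : 'M[C]_N :=
  \matrix_(i < N, j < N) dotv (w i) (v j).

(* max_{i <> j} |G_ij|^2  (all terms are >= 0, so the seed 0 is harmless) *)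
Definition max_offdiag_sq (N : nat) (G : 'M[C]_N) : C :=
  \big[Num.max/0]_(p : 'I_N * 'I_N | p.1 != p.2) (`|G p.1 p.2| ^+ 2).

End FrameDefs.

(* The mixed Gram matrix G = (<w_i, v_j>) of an oblique dual pair is G = (Y^* M)^T, where M and
   Y are the synthesis matrices of w and v, and Y^* M is idempotent because M Y^* is the oblique
   projection onto W. So G is an idempotent of rank d = dim W, and by the hypothesis its diagonal
   is constantly d/N. The squared Frobenius norm of an idempotent is at least its rank, with
   equality exactly for Hermitian ones; removing the diagonal contribution d^2/N leaves at least
   d - d^2/N for the N(N-1) off-diagonal squared moduli, whence the bound on their maximum, with
   equality iff G is Hermitian with off-diagonal entries of constant modulus. G is Hermitian iff
   it equals the Gram matrix (<w_i, S^+ w_j>) of the canonical dual, iff v_j = pi_{VW^perp} S^+ w_j;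
   in that case (N/d) G is the Gram matrix of psi_i = sqrt(N/d) (S^+)^{1/2} w_i, a tight frame
   for W since (S^+)^{1/2} S (S^+)^{1/2} = S^+ S is the orthogonal projection onto W. *)

From HB Require Import structures.
From mathcomp Require Import all_boot all_order all_algebra.
From mathcomp Require Import reals complex ring.
Set Implicit Arguments.
Unset Strict Implicit.
Unset Printing Implicit Defensive.
Import Order.TTheory GRing.Theory Num.Theory.
Local Open Scope ring_scope.

Section Adjoint.
Variable C : numClosedFieldType.

Lemma adjmxE m p (A : 'M[C]_(m, p)) i j : adjmx A i j = (A j i)^*.
Proof. by rewrite !mxE. Qed.

Lemma adjmxK m p (A : 'M[C]_(m, p)) : adjmx (adjmx A) = A.
Proof. by apply/matrixP => i j; rewrite !adjmxE conjCK. Qed.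

Lemma adjmxD m p (A B : 'M[C]_(m, p)) : adjmx (A + B) = adjmx A + adjmx B.
Proof. by rewrite /adjmx map_mxD linearD. Qed.

Lemma adjmxB m p (A B : 'M[C]_(m, p)) : adjmx (A - B) = adjmx A - adjmx B.
Proof. by rewrite /adjmx map_mxB linearB. Qed.

Lemma adjmxZ m p a (A : 'M[C]_(m, p)) : adjmx (a *: A) = a^* *: adjmx A.
Proof. by rewrite /adjmx map_mxZ linearZ. Qed.

Lemma adjmxM m p q (A : 'M[C]_(m, p)) (B : 'M[C]_(p, q)) :
  adjmx (A *m B) = adjmx B *m adjmx A.
Proof. by rewrite /adjmx map_mxM trmx_mul. Qed.

Lemma adjmx1 m : adjmx (1%:M : 'M[C]_m) = 1%:M.
Proof. by rewrite /adjmx map_mx1 trmx1. Qed.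

Lemma adjmx0 m p : adjmx (0 : 'M[C]_(m, p)) = 0.
Proof. by rewrite /adjmx map_mx0 trmx0. Qed.

Lemma adjmx_tr m p (A : 'M[C]_(m, p)) : adjmx A^T = (adjmx A)^T.
Proof. by apply/matrixP => i j; rewrite !mxE. Qed.

Lemma mxtrace_adj m (A : 'M[C]_m) : \tr (adjmx A) = (\tr A)^*.
Proof. by rewrite mxtrace_tr /mxtrace rmorph_sum; apply: eq_bigr => i _; rewrite mxE. Qed.

Lemma dotv_conj n (x y : 'cV[C]_n) : dotv x y = (dotv y x)^*.
Proof. by rewrite /dotv -adjmxE adjmxM adjmxK. Qed.

End Adjoint.

Definition sqfnorm (C : numClosedFieldType) m p (X : 'M[C]_(m, p)) : C :=
  \sum_i \sum_j `|X i j| ^+ 2.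

Section FrobeniusNorm.
Variable C : numClosedFieldType.
Implicit Types m p : nat.

Lemma sqfnormE m p (X : 'M[C]_(m, p)) : sqfnorm X = \tr (X *m adjmx X).
Proof.
apply: eq_bigr => i _; rewrite mxE; apply: eq_bigr => j _.
by rewrite adjmxE normCK.
Qed.

Lemma sqfnorm_ge0 m p (X : 'M[C]_(m, p)) : 0 <= sqfnorm X.
Proof. by apply: sumr_ge0 => i _; apply: sumr_ge0 => j _; apply: exprn_ge0. Qed.

Lemma sqfnorm_eq0 m p (X : 'M[C]_(m, p)) : sqfnorm X = 0 -> X = 0.
Proof.
move=> X0; apply/matrixP => i j; rewrite mxE.
have row0 : \sum_j `|X i j| ^+ 2 = 0.
  by apply: (psumr_eq0P _ X0) => // k _; apply: sumr_ge0 => l _; apply: exprn_ge0.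
have /eqP : `|X i j| ^+ 2 = 0 by apply: (psumr_eq0P _ row0) => // k _; apply: exprn_ge0.
by rewrite expf_eq0 /= normr_eq0 => /eqP.
Qed.

Lemma mul_adjmx_eq0 m p (X : 'M[C]_(m, p)) : X *m adjmx X = 0 -> X = 0.
Proof. by move=> XX0; apply: sqfnorm_eq0; rewrite sqfnormE XX0 mxtrace0. Qed.

Lemma adjmx_mul_eq0 m p (X : 'M[C]_(m, p)) : adjmx X *m X = 0 -> X = 0.
Proof.
by rewrite -{2}[X]adjmxK => /mul_adjmx_eq0 X0; rewrite -[X]adjmxK X0 adjmx0.
Qed.

Lemma dotvv_eq0 n (x : 'cV[C]_n) : dotv x x = 0 -> x = 0.
Proof. by move=> xx0; apply: adjmx_mul_eq0; apply/matrixP => i j; rewrite !ord1 [RHS]mxE. Qed.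

End FrobeniusNorm.

Lemma mxtrace_idem (F : fieldType) n (E : 'M[F]_n) : E *m E = E -> \tr E = (\rank E)%:R.
Proof.
move=> EE; have := mulmx_base E; have := row_base_free E; have := col_base_full E.
move: (col_base E) (row_base E) => Cb Rb Cb_full Rb_free Ebase.
have RC : Rb *m Cb = 1%:M.
  apply: (row_free_inj Rb_free); rewrite mul1mx; apply: (row_full_inj Cb_full).
  by rewrite !mulmxA Ebase -mulmxA Ebase EE.
by rewrite -{1}Ebase mxtrace_mulC RC mxtrace1.
Qed.

Section IdempotentFrobenius.
Variables (C : numClosedFieldType) (n : nat) (E : 'M[C]_n).
Hypothesis E_idem : E *m E = E.

(* In the expansion of [(E - E^* )(E - E^* )^*] the cross terms have trace [tr (E E) = rank E]. *)
Lemma sqfnorm_idem : 2 * sqfnorm E = 2 * (\rank E)%:R + sqfnorm (E - adjmx E).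
Proof.
have trE := mxtrace_idem E_idem.
have trEE : \tr (adjmx E *m adjmx E) = (\rank E)%:R.
  by rewrite -adjmxM E_idem mxtrace_adj trE conjC_nat.
rewrite !sqfnormE adjmxB adjmxK mulmxBl !mulmxBr !raddfB /= E_idem trE trEE.
rewrite [\tr (adjmx E *m E)]mxtrace_mulC; ring.
Qed.

Lemma rank_le_sqfnorm_idem : (\rank E)%:R <= sqfnorm E.
Proof.
by rewrite -(ler_pM2l (ltr0Sn _ 1)) sqfnorm_idem lerDl sqfnorm_ge0.
Qed.

Lemma sqfnorm_idem_eq_rank : sqfnorm E = (\rank E)%:R <-> adjmx E = E.
Proof.
split => [EE | E_herm].
  move: sqfnorm_idem; rewrite EE -[X in X = _]addr0 => /addrI/esym/sqfnorm_eq0/eqP.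
  by rewrite subr_eq0 eq_sym => /eqP.
apply: (@mulfI _ 2); first by rewrite pnatr_eq0.
by rewrite sqfnorm_idem E_herm subrr (_ : sqfnorm 0 = 0) ?addr0 // sqfnormE mul0mx mxtrace0.
Qed.
End IdempotentFrobenius.

Section NonnegMax.
Variables (C : numDomainType) (I : finType) (P : pred I) (F : I -> C).
Hypothesis F_ge0 : forall i, P i -> 0 <= F i.

Lemma bigmax_ge0_ub i : P i -> F i <= \big[Num.max/0]_(j | P j) F j.
Proof.
suff [_ ub] : 0 <= \big[Num.max/0]_(j <- index_enum I | P j) F j /\
  forall i, i \in index_enum I -> P i -> F i <= \big[Num.max/0]_(j <- index_enum I | P j) F j.
  by move=> Pi; apply: ub; rewrite ?mem_index_enum.
elim: (index_enum I) => [|a r [IH0 IHub]]; first by rewrite big_nil.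
rewrite big_cons; case: ifP => Pa; last first.
  by split=> // j; rewrite in_cons => /orP[/eqP-> /[!Pa] | /IHub].
have cmp : F a >=< \big[Num.max/0]_(j <- r | P j) F j.
  by rewrite real_comparable ?ger0_real ?F_ge0.
split; first by rewrite comparable_le_max // F_ge0.
move=> j; rewrite in_cons comparable_le_max // => /orP[/eqP-> _ | /IHub jr Pj].
  by rewrite lexx.
by rewrite jr ?orbT.
Qed.

Lemma bigmax_le_ge0 c : 0 <= c -> (forall i, P i -> F i <= c) ->
  \big[Num.max/0]_(j | P j) F j <= c.
Proof.
move=> c_ge0 F_le; elim/big_ind: _ => [//|x y xc yc|i /F_le //].
by rewrite /Num.max /Order.max; case: ifP.
Qed.

End NonnegMax.

Definition offdiag_sqsum (C : numClosedFieldType) N (G : 'M[C]_N) : C :=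
  \sum_i \sum_(j | i != j) `|G i j| ^+ 2.

Section OffDiagonal.
Variables (C : numClosedFieldType) (N : nat) (G : 'M[C]_N).
Local Notation K := (N%:R * (N%:R - 1) : C).

Lemma sqfnorm_diag_offdiag : sqfnorm G = \sum_i `|G i i| ^+ 2 + offdiag_sqsum G.
Proof.
rewrite /offdiag_sqsum -big_split; apply: eq_bigr => i _.
by rewrite (bigD1 i) //=; congr (_ + _); apply: eq_bigl => j; rewrite eq_sym.
Qed.

Lemma offdiag_sum_const c : \sum_(i < N) \sum_(j < N | i != j) c = K * c.
Proof.
have row_sum i : \sum_(j < N | i != j) c = c *+ N - c.
  rewrite -[in c *+ N](card_ord N) -sumr_const [in RHS](bigD1 i) //= addrC addrK.
  by apply: eq_bigl => j; rewrite eq_sym.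
rewrite (eq_bigr _ (fun i _ => row_sum i)) sumr_const card_ord.
by rewrite -[(c *+ N - c) *+ N]mulr_natr -[c *+ N]mulr_natr; ring.
Qed.

Lemma max_offdiag_sq_ge i j : i != j -> `|G i j| ^+ 2 <= max_offdiag_sq G.
Proof.
move=> ij; apply: (@bigmax_ge0_ub _ _ (fun p : 'I_N * 'I_N => p.1 != p.2)
  (fun p => `|G p.1 p.2| ^+ 2) _ (i, j)) => // p _.
exact: exprn_ge0.
Qed.

Lemma max_offdiag_sq_const c : (1 < N)%N ->
  (forall i j, i != j -> `|G i j| ^+ 2 = c) -> max_offdiag_sq G = c.
Proof.
move=> N_gt1 Gc; pose i0 := Ordinal (ltnW N_gt1); pose i1 := Ordinal N_gt1.
have c_ge0 : 0 <= c by rewrite -(Gc i0 i1) ?exprn_ge0.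
apply/le_anti/andP; split; last by rewrite -(Gc i0 i1) // max_offdiag_sq_ge.
by apply: bigmax_le_ge0 => // p /Gc ->.
Qed.

Lemma offdiag_sqsum_le_max : offdiag_sqsum G <= K * max_offdiag_sq G.
Proof.
by rewrite -offdiag_sum_const; apply: ler_sum => i _; apply: ler_sum => j; apply: max_offdiag_sq_ge.
Qed.

Lemma offdiag_sqsum_eq_max : offdiag_sqsum G = K * max_offdiag_sq G ->
  forall i j, i != j -> `|G i j| ^+ 2 = max_offdiag_sq G.
Proof.
move=> Gmax.
have gap_ge0 i j : i != j -> 0 <= max_offdiag_sq G - `|G i j| ^+ 2.
  by move=> ij; rewrite subr_ge0 max_offdiag_sq_ge.
have gap0 : \sum_i \sum_(j | i != j) (max_offdiag_sq G - `|G i j| ^+ 2) = 0.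
  under eq_bigr do rewrite sumrB.
  by rewrite sumrB offdiag_sum_const -/(offdiag_sqsum G) Gmax subrr.
move=> i j ij; apply/eqP; rewrite eq_sym -subr_eq0; apply/eqP.
have row0 : \sum_(k | i != k) (max_offdiag_sq G - `|G i k| ^+ 2) = 0.
  by apply: (psumr_eq0P _ gap0) => // k _; apply: sumr_ge0 => l /gap_ge0.
exact: (psumr_eq0P (gap_ge0 i) row0).
Qed.

End OffDiagonal.

Definition welch_bound {C : numFieldType} (d N : nat) : C :=
  d%:R * (N%:R - d%:R) / (N%:R ^+ 2 * (N%:R - 1)).

Lemma welch_boundE (C : numClosedFieldType) (d N : nat) : (0 < d)%N -> (1 < N)%N ->
  welch_bound d N = (d%:R / N%:R * sqrtC ((N%:R - d%:R) / (d%:R * (N%:R - 1)))) ^+ 2 :> C.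
Proof.
move=> d_gt0 N_gt1; rewrite exprMn sqrtCK /welch_bound; field.
by rewrite subr_eq0 pnatr_eq1 !pnatr_eq0 !gtn_eqF // ltnW.
Qed.

Section WelchBound.
Variables (C : numClosedFieldType) (N : nat) (G : 'M[C]_N).
Hypotheses (N_gt1 : (1 < N)%N) (G_idem : G *m G = G) (G_diag : forall i j, G i i = G j j).
Local Notation d := (\rank G).
Local Notation b := (welch_bound d N : C).
Local Notation K := (N%:R * (N%:R - 1) : C).

Let N_neq0 : N%:R != 0 :> C.
Proof. by rewrite pnatr_eq0 gtn_eqF // ltnW. Qed.

Let N1_neq0 : N%:R - 1 != 0 :> C.
Proof. by rewrite subr_eq0 pnatr_eq1 gtn_eqF. Qed.

Let K_gt0 : 0 < K.
Proof. by rewrite mulr_gt0 ?subr_gt0 ?ltr1n ?ltr0n // ltnW. Qed.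

Lemma diag_idem_const i : G i i = d%:R / N%:R.
Proof.
have : \tr G = G i i *+ N.
  by rewrite /mxtrace (eq_bigr _ (fun j _ => G_diag j i)) sumr_const card_ord.
by rewrite mxtrace_idem // => ->; rewrite -[G i i *+ N]mulr_natr mulfK // N_neq0.
Qed.

Lemma offdiag_sqsum_sub_welch : offdiag_sqsum G - K * b = sqfnorm G - d%:R.
Proof.
rewrite sqfnorm_diag_offdiag; under eq_bigr do rewrite diag_idem_const.
rewrite sumr_const card_ord -[_ ^+ 2 *+ N]mulr_natr ger0_norm ?divr_ge0 // /welch_bound.
by field; rewrite N_neq0 N1_neq0.
Qed.

Lemma welch_le_offdiag_sqsum : K * b <= offdiag_sqsum G.
Proof. by rewrite -subr_ge0 offdiag_sqsum_sub_welch subr_ge0 rank_le_sqfnorm_idem. Qed.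

Lemma offdiag_sqsum_eq_welch : offdiag_sqsum G = K * b <-> adjmx G = G.
Proof.
rewrite -sqfnorm_idem_eq_rank //; split => [Gb | Gd].
  by apply/eqP; rewrite -subr_eq0 -offdiag_sqsum_sub_welch Gb subrr.
by apply/eqP; rewrite -subr_eq0 offdiag_sqsum_sub_welch Gd subrr.
Qed.

Lemma welch_bound_le : b <= max_offdiag_sq G.
Proof.
by rewrite -(ler_pM2l K_gt0); apply: le_trans welch_le_offdiag_sqsum (offdiag_sqsum_le_max G).
Qed.

Lemma max_offdiag_sq_eq_welch :
  max_offdiag_sq G = b <-> adjmx G = G /\ forall i j, i != j -> `|G i j| ^+ 2 = b.
Proof.
split => [Gmax | [_ Gb]]; last exact: max_offdiag_sq_const.
have offb : offdiag_sqsum G = K * b.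
  by apply/le_anti; rewrite welch_le_offdiag_sqsum -Gmax offdiag_sqsum_le_max.
split; first exact/offdiag_sqsum_eq_welch.
by move=> i j ij; rewrite -Gmax (offdiag_sqsum_eq_max _ ij) // Gmax.
Qed.

Lemma hermitian_offdiag_const c : adjmx G = G -> (forall i j, i != j -> `|G i j| = c) ->
  forall i j, i != j -> `|G i j| ^+ 2 = b.
Proof.
move=> /offdiag_sqsum_eq_welch offb Gc i j ij; rewrite Gc //.
apply: (mulfI (lt0r_neq0 K_gt0)); rewrite -offb -offdiag_sum_const.
by apply: eq_bigr => k _; apply: eq_bigr => l kl; rewrite Gc.
Qed.

Lemma max_offdiag_sq_eq_welch_const :
  max_offdiag_sq G = b <-> adjmx G = G /\ exists c, forall i j, i != j -> `|G i j| = c.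
Proof.
rewrite max_offdiag_sq_eq_welch; split => [[Gd Gb] | [Gd [c Gc]]].
  by split => //; exists (sqrtC b) => i j ij; rewrite -(Gb i j ij) sqrCK.
by split => //; apply: hermitian_offdiag_const Gc.
Qed.

Lemma sqrt_welch_ratio_ge0 : 0 <= sqrtC ((N%:R - d%:R) / (d%:R * (N%:R - 1))) :> C.
Proof.
rewrite sqrtC_ge0 divr_ge0 ?mulr_ge0 // subr_ge0 ?ler_nat ?rank_leq_row //.
by rewrite ler1n ltnW.
Qed.

Lemma max_offdiag_sq_eq_welch_sqrt : (0 < d)%N ->
  max_offdiag_sq G = b <-> adjmx G = G /\ forall i j, i != j ->
    `|G i j| = d%:R / N%:R * sqrtC ((N%:R - d%:R) / (d%:R * (N%:R - 1))).
Proof.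
move=> d_gt0; rewrite max_offdiag_sq_eq_welch welch_boundE //.
have a_ge0 := mulr_ge0 (divr_ge0 (ler0n C d) (ler0n C N)) sqrt_welch_ratio_ge0.
by split=> -[Gd Gb]; split=> // i j ij; [apply/eqP; rewrite -(eqrXn2 (ltn0Sn 1)) ?Gb | rewrite Gb].
Qed.

End WelchBound.

Lemma gen_signature_decomp_iff (C : numClosedFieldType) N (G : 'M[C]_N) (a t : C) :
  0 <= a -> 0 <= t -> (forall i, G i i = a) ->
  (exists Q, gen_signature Q /\ G = a *: (1%:M + t *: Q)) <->
  adjmx G = G /\ forall i j, i != j -> `|G i j| = a * t.
Proof.
move=> a_ge0 t_ge0 Ga.
have [a_conj t_conj] := (conj_Creal (ger0_real a_ge0), conj_Creal (ger0_real t_ge0)).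
split => [[Q [[Q_herm _ Q1] ->]] | [G_herm Gat]].
  split; first by rewrite adjmxZ adjmxD adjmx1 adjmxZ Q_herm a_conj t_conj.
  move=> i j ij; rewrite !mxE (negbTE ij) add0r !normrM Q1 //.
  by rewrite mulr1 !ger0_norm.
have G_conj i j : G j i = (G i j)^* by rewrite -{1}G_herm adjmxE.
pose Q := \matrix_(i, j) if i == j then 0 else if G i j == 0 then 1 else G i j / `|G i j|.
exists Q; split; first split.
- apply/matrixP => i j; rewrite adjmxE !mxE eq_sym G_conj conjC_eq0.
  case: eqP => [_|_]; first by rewrite conjC0.
  case: eqP => _; first by rewrite conjC1.
  by rewrite rmorphM /= fmorphV /= norm_conjC conjCK conj_Creal ?normr_real.
- by move=> i; rewrite mxE eqxx.
- move=> i j ij; rewrite mxE (negbTE ij); case: eqP => [_|/eqP G0]; first by rewrite normr1.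
  by rewrite normf_div normr_id divff // normr_eq0.
apply/matrixP => i j; rewrite !mxE; case: (eqVneq i j) => [<-|ij].
  by rewrite Ga mulr0 addr0 mulr1.
rewrite add0r mulrA -(Gat i j ij); case: eqP => [G0|/eqP G0].
  by rewrite G0 normr0 mul0r.
by rewrite mulrC divfK // normr_eq0.
Qed.

Lemma eq_mulmx_cV (R : pzRingType) m p (X Z : 'M[R]_(m, p)) :
  (forall f : 'cV[R]_p, X *m f = Z *m f) -> X = Z.
Proof.
move=> XZ; apply/matrixP => i j.
by have := congr1 (fun f : 'cV_m => f i 0) (XZ (delta_mx j 0)); rewrite -!colE !mxE.
Qed.

Section Synthesis.
Variables (C : numClosedFieldType) (n N : nat).
Implicit Types f : 'I_N -> 'cV[C]_n.

Definition synthesis_mx f : 'M[C]_(n, N) := \matrix_(r, i) f i r 0.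

Lemma synthesis_mxE f r i : synthesis_mx f r i = f i r 0.
Proof. by rewrite mxE. Qed.

Lemma col_synthesis_mx f j : col j (synthesis_mx f) = f j.
Proof. by apply/matrixP => r k; rewrite !mxE ord1. Qed.

Lemma synthesis_mxMl (A : 'M[C]_n) f :
  synthesis_mx (fun k => A *m f k) = A *m synthesis_mx f.
Proof.
apply/matrixP => r k; rewrite !mxE; apply: eq_bigr => s _.
by rewrite synthesis_mxE.
Qed.

Lemma synthesis_mxZ (a : C) f : synthesis_mx (fun k => a *: f k) = a *: synthesis_mx f.
Proof. by apply/matrixP => r k; rewrite !mxE. Qed.

Lemma frame_opE f : frame_op f = synthesis_mx f *m adjmx (synthesis_mx f).
Proof.
apply/matrixP => r s; rewrite summxE !mxE; apply: eq_bigr => i _.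
by rewrite !mxE big_ord1 !adjmxE.
Qed.

Lemma mixed_gramE f g : mixed_gram f g = (adjmx (synthesis_mx g) *m synthesis_mx f)^T.
Proof.
apply/matrixP => i j; rewrite !mxE /dotv mxE; apply: eq_bigr => r _.
by rewrite !adjmxE !synthesis_mxE.
Qed.

Lemma dotv_synthesis x f i : dotv x (f i) = (adjmx (synthesis_mx f) *m x) i 0.
Proof.
by rewrite /dotv !mxE; apply: eq_bigr => r _; rewrite !adjmxE !synthesis_mxE.
Qed.

Lemma is_frameE U f : is_frame U f = ((synthesis_mx f)^T == U)%MS.
Proof.
rewrite /is_frame (_ : \matrix_(i < N) (f i)^T = (synthesis_mx f)^T) //.
by apply/matrixP => i r; rewrite !mxE.
Qed.

Lemma frame_op_dotv f x : dotv (frame_op f *m x) x = \sum_i `|dotv x (f i)| ^+ 2.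
Proof.
rewrite frame_opE /dotv !mulmxA -mulmxA.
have -> : adjmx x *m synthesis_mx f = adjmx (adjmx (synthesis_mx f) *m x).
  by rewrite adjmxM adjmxK.
rewrite mxE.
by apply: eq_bigr => i _; rewrite adjmxE -/(dotv x (f i)) dotv_synthesis normCKC.
Qed.

Lemma frame_rank_le U f : is_frame U f -> (\rank U <= N)%N.
Proof. by rewrite is_frameE => /eqmxP <-; rewrite mxrank_tr rank_leq_col. Qed.

Lemma frame_memP U f : is_frame U f ->
  forall x, inU U x <-> exists c, x = synthesis_mx f *m c.
Proof.
rewrite is_frameE => /eqmxP Uf x; rewrite /inU -Uf; split => [/submxP [c xc] | [c ->]].
  by exists c^T; rewrite -[x]trmxK xc trmx_mul trmxK.
by rewrite trmx_mul submxMl.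
Qed.

Lemma frame_mem U f i : is_frame U f -> inU U (f i).
Proof.
by move=> Uf; apply/(frame_memP Uf); exists (delta_mx i 0); rewrite -colE col_synthesis_mx.
Qed.

End Synthesis.

Section ObliqueProjection.
Variables (C : numClosedFieldType) (n : nat) (W V : 'M[C]_n).

Lemma inU_sub (U : 'M[C]_n) x y : inU U x -> inU U y -> inU U (x - y).
Proof. by rewrite /inU linearB => xU yU; rewrite addmx_sub // eqmx_opp. Qed.

Lemma direct_sum_perp_orth u : direct_sum_perp W V -> inU V u ->
  (forall x, inU W x -> dotv u x = 0) -> u = 0.
Proof.
move=> [decomp _] uV uW; apply: dotvv_eq0.
have [x [y [xW yV u_eq]]] := decomp u.
rewrite {2}u_eq /dotv adjmxD mulmxDl mxE -/(dotv u x) -/(dotv u y).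
by rewrite uW // dotv_conj yV // conjC0 addr0.
Qed.

Lemma oblique_proj_id P x : direct_sum_perp W V -> oblique_proj W V P ->
  inU W x -> P *m x = x.
Proof.
move=> [_ trivWV] /(_ x) [PxW xPx] xW; apply/eqP; rewrite eq_sym -subr_eq0.
by apply/eqP/trivWV => //; apply: inU_sub.
Qed.

Lemma adjmx_oblique_proj P x : oblique_proj V W P -> inU W x -> adjmx x *m P = adjmx x.
Proof.
move=> hP xW; apply: eq_mulmx_cV => f; apply/eqP; rewrite eq_sym -subr_eq0 -mulmxA -mulmxBr.
by apply/eqP/matrixP => i j; rewrite !ord1 [RHS]mxE; apply: (hP f).2.
Qed.

End ObliqueProjection.

Section ObliqueDualFrame.
Variables (C : numClosedFieldType) (n N : nat) (W V Pw Pv Sd Sh : 'M[C]_n).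
Variables w v : 'I_N -> 'cV[C]_n.
Hypotheses (WV : direct_sum_perp W V) (Pw_proj : oblique_proj W V Pw).
Hypotheses (Pv_proj : oblique_proj V W Pv) (w_frame : is_frame W w).
Hypotheses (v_dual : oblique_dual V Pw w v) (Sd_pinv : is_MP_inverse (frame_op w) Sd).
Hypotheses (Sh_herm : adjmx Sh = Sh) (Sh_sq : Sh *m Sh = Sd).

Local Notation M := (synthesis_mx w).
Local Notation Y := (synthesis_mx v).
Local Notation S := (frame_op w).
Local Notation G := (mixed_gram w v).
Local Notation Gc := (mixed_gram w (fun j => Sd *m w j)).
Local Notation d := (\rank W).

Lemma oblique_proj_synthesis : Pw *m M = M.
Proof.
apply: eq_mulmx_cV => c; rewrite -mulmxA (oblique_proj_id WV Pw_proj) //.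
by apply/(frame_memP w_frame); exists c.
Qed.

Lemma oblique_dual_projE : Pw = M *m adjmx Y.
Proof.
apply: eq_mulmx_cV => f; rewrite v_dual.2 -mulmxA.
apply/matrixP => r k; rewrite ord1 summxE [RHS]mxE; apply: eq_bigr => i _.
by rewrite !mxE dotv_synthesis mxE mulrC.
Qed.

Lemma mixed_gram_idem : G *m G = G.
Proof.
rewrite mixed_gramE -trmx_mul mulmxA -(mulmxA _ M) -oblique_dual_projE -mulmxA.
by rewrite oblique_proj_synthesis.
Qed.

Lemma rank_oblique_proj : \rank Pw = d.
Proof.
have WM : (M^T == W)%MS by rewrite -is_frameE.
rewrite -mxrank_tr -(eqmx_rank WM); apply/eqmx_rank/andP; split.
  by rewrite oblique_dual_projE trmx_mul submxMl.
by rewrite -{1}oblique_proj_synthesis trmx_mul submxMl.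
Qed.

Lemma rank_mixed_gram : \rank G = d.
Proof.
have Pw_idem : Pw *m Pw = Pw.
  by rewrite {2}oblique_dual_projE mulmxA oblique_proj_synthesis -oblique_dual_projE.
apply/eqP; rewrite -(eqr_nat C) -rank_oblique_proj; apply/eqP.
rewrite -!mxtrace_idem ?mixed_gram_idem //.
by rewrite mixed_gramE mxtrace_tr mxtrace_mulC -oblique_dual_projE.
Qed.

Lemma pinv_herm : adjmx Sd = Sd.
Proof. by rewrite -Sh_sq adjmxM Sh_herm. Qed.

Lemma frame_op_herm : adjmx S = S.
Proof. by rewrite frame_opE adjmxM adjmxK. Qed.

Lemma frame_op_pinvC : S *m Sd = Sd *m S.
Proof. by case: Sd_pinv => _ _ SSd _; rewrite -SSd adjmxM pinv_herm frame_op_herm. Qed.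

Lemma frame_op_pinv_synthesis : S *m Sd *m M = M.
Proof.
have [SSdS _ _ _] := Sd_pinv.
apply/eqP; rewrite -subr_eq0; apply/eqP/mul_adjmx_eq0.
rewrite adjmxB !adjmxM pinv_herm frame_op_herm mulmxBl !mulmxBr !mulmxA.
rewrite -!(mulmxA _ M (adjmx M)) -frame_opE.
by rewrite !SSdS subrr.
Qed.

Lemma pinv_frame_op_id x : inU W x -> Sd *m S *m x = x.
Proof.
by move=> /(frame_memP w_frame) [c ->]; rewrite mulmxA -frame_op_pinvC frame_op_pinv_synthesis.
Qed.

Lemma canonical_gramE : Gc = (adjmx M *m Sd *m M)^T.
Proof. by rewrite mixed_gramE synthesis_mxMl adjmxM pinv_herm. Qed.

Lemma adjmx_synthesis_proj : adjmx M *m Pv = adjmx M.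
Proof.
apply/row_matrixP => i; rewrite row_mul.
have -> : row i (adjmx M) = adjmx (w i).
  by apply/matrixP => a b; rewrite mxE !adjmxE synthesis_mxE ord1.
exact: adjmx_oblique_proj Pv_proj (frame_mem i w_frame).
Qed.

Lemma gram_herm_iff :
  adjmx (adjmx Y *m M) = adjmx Y *m M <-> adjmx Y *m M = adjmx M *m Sd *m M.
Proof.
have B_herm : adjmx (adjmx M *m Sd *m M) = adjmx M *m Sd *m M.
  by rewrite !adjmxM adjmxK pinv_herm mulmxA.
have AB : adjmx Y *m M *m (adjmx M *m Sd *m M) = adjmx Y *m M.
  by rewrite !mulmxA -(mulmxA _ M) -frame_opE -!mulmxA (mulmxA S) frame_op_pinv_synthesis.
have BA : adjmx M *m Sd *m M *m (adjmx Y *m M) = adjmx M *m Sd *m M.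
  by rewrite !mulmxA -(mulmxA _ M) -oblique_dual_projE -mulmxA oblique_proj_synthesis.
split => [A_herm | ->]; last exact: B_herm.
by rewrite -A_herm -{1}AB adjmxM A_herm B_herm BA.
Qed.

Lemma mixed_gram_herm_iff : adjmx G = G <-> G = Gc.
Proof.
rewrite canonical_gramE mixed_gramE adjmx_tr.
by split => [/trmx_inj/gram_herm_iff -> // | /trmx_inj/gram_herm_iff ->].
Qed.

Lemma mixed_gram_canonical_iff : G = Gc <-> forall j, v j = Pv *m Sd *m w j.
Proof.
rewrite canonical_gramE mixed_gramE; split => [/trmx_inj AB j | v_can].
  have MY : adjmx M *m Y = adjmx M *m Sd *m M.
    by rewrite -[Y]adjmxK -adjmxM AB !adjmxM adjmxK pinv_herm mulmxA.
  have Mu : adjmx M *m (v j - Pv *m Sd *m w j) = 0.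
    rewrite mulmxBr !mulmxA adjmx_synthesis_proj.
    by rewrite -(col_synthesis_mx v j) -(col_synthesis_mx w j) !colE !mulmxA MY subrr.
  apply/eqP; rewrite -subr_eq0; apply/eqP/(direct_sum_perp_orth WV).
    apply: inU_sub; first exact: frame_mem v_dual.1.
    by rewrite -mulmxA; apply: (Pv_proj _).1.
  by move=> x /(frame_memP w_frame) [c ->]; rewrite /dotv adjmxM -mulmxA Mu mulmx0 mxE.
have -> : Y = Pv *m Sd *m M.
  by rewrite -synthesis_mxMl; apply/matrixP => r k; rewrite !synthesis_mxE v_can.
have PvM : adjmx Pv *m M = M.
  by rewrite -[M in RHS]adjmxK -adjmx_synthesis_proj adjmxM adjmxK.
by rewrite !adjmxM pinv_herm -!mulmxA PvM.
Qed.

Lemma Sh_frame_op_pinv : Sh *m S *m Sd = Sh.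
Proof.
have [_ SdSSd _ _] := Sd_pinv.
apply/eqP; rewrite eq_sym -subr_eq0; apply/eqP.
have -> : Sh - Sh *m S *m Sd = Sh *m (1%:M - S *m Sd) by rewrite mulmxBr mulmx1 mulmxA.
apply: adjmx_mul_eq0; rewrite adjmxM Sh_herm -mulmxA (mulmxA Sh) Sh_sq.
by rewrite mulmxBr mulmx1 mulmxA SdSSd subrr mulmx0.
Qed.

Lemma pinv_frame_op_Sh : Sd *m S *m Sh = Sh.
Proof.
have := congr1 (@adjmx C n n) Sh_frame_op_pinv.
by rewrite !adjmxM Sh_herm pinv_herm frame_op_herm mulmxA.
Qed.

Lemma Sh_frame_op : Sh *m S *m Sh = Sd *m S.
Proof.
have T_herm : adjmx (Sh *m S *m Sh) = Sh *m S *m Sh.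
  by rewrite !adjmxM Sh_herm frame_op_herm mulmxA.
have TP : Sh *m S *m Sh *m (Sd *m S) = Sd *m S.
  by rewrite -{1}Sh_sq !mulmxA -(mulmxA (Sh *m S) Sh Sh) Sh_sq Sh_frame_op_pinv Sh_sq.
have PT : Sd *m S *m (Sh *m S *m Sh) = Sh *m S *m Sh by rewrite !mulmxA pinv_frame_op_Sh.
have := congr1 (@adjmx C n n) TP.
by rewrite adjmxM T_herm !adjmxM pinv_herm frame_op_herm frame_op_pinvC PT.
Qed.

Hypothesis W_neq0 : (0 < d)%N.

Local Notation psi := (fun k => sqrtC (N%:R / d%:R) *: (Sh *m w k)).

Let Nd_gt0 : 0 < N%:R / d%:R :> C.
Proof. by rewrite divr_gt0 ?ltr0n // (leq_trans W_neq0) ?(frame_rank_le w_frame). Qed.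

Let sqrt_Nd_ge0 : 0 <= sqrtC (N%:R / d%:R) :> C.
Proof. by rewrite sqrtC_ge0 ltW ?Nd_gt0. Qed.

Lemma frame_op_psi : frame_op psi = N%:R / d%:R *: (Sd *m S).
Proof.
rewrite frame_opE synthesis_mxZ synthesis_mxMl adjmxZ adjmxM Sh_herm.
rewrite -scalemxAl -scalemxAr scalerA conj_Creal ?ger0_real ?sqrt_Nd_ge0 // -expr2 sqrtCK.
by rewrite mulmxA -(mulmxA Sh) -frame_opE Sh_frame_op.
Qed.

Lemma psi_tight x : inU W x -> \sum_i `|dotv x (psi i)| ^+ 2 = N%:R / d%:R * dotv x x.
Proof.
move=> xW; rewrite -frame_op_dotv frame_op_psi -scalemxAl pinv_frame_op_id //.
by rewrite /dotv -scalemxAr mxE.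
Qed.

Lemma psi_frame : is_frame W psi.
Proof.
have WM : (M^T :=: W)%MS by apply/eqmxP; rewrite -is_frameE.
have s_neq0 : sqrtC (N%:R / d%:R) != 0 :> C by rewrite sqrtC_eq0 gt_eqF ?Nd_gt0.
have e1 : Sh *m M = M *m (adjmx M *m Sd *m Sh *m M).
  by rewrite -{1}pinv_frame_op_Sh -frame_op_pinvC frame_opE !mulmxA.
have e2 : M = Sh *m M *m (adjmx M *m Sh *m M).
  by rewrite -{1}frame_op_pinv_synthesis frame_op_pinvC -Sh_frame_op frame_opE !mulmxA.
have ShM : ((Sh *m M)^T :=: M^T)%MS.
  by apply/eqmxP/andP; split; [rewrite e1 | rewrite {1}e2]; rewrite trmx_mul submxMl.
rewrite is_frameE synthesis_mxZ synthesis_mxMl linearZ /=; apply/eqmxP.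
exact: eqmx_trans (eqmx_scale _ s_neq0) (eqmx_trans ShM WM).
Qed.

Lemma dotv_psi i j : dotv (psi i) (psi j) = N%:R / d%:R * Gc i j.
Proof.
rewrite /dotv adjmxZ -scalemxAl -scalemxAr scalerA mxE.
rewrite conj_Creal ?ger0_real ?sqrt_Nd_ge0 // -expr2 sqrtCK.
by rewrite [Gc i j]mxE /dotv !adjmxM Sh_herm pinv_herm -!mulmxA (mulmxA Sh) Sh_sq.
Qed.

Lemma psi_ETF_iff : adjmx G = G -> (forall i, G i i = d%:R / N%:R) ->
  is_ETF d W psi <-> exists c, forall i j, i != j -> `|G i j| = c.
Proof.
move=> /mixed_gram_herm_iff G_can G_diag.
have dot_psi i j : dotv (psi i) (psi j) = N%:R / d%:R * G i j by rewrite dotv_psi G_can.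
have dN_Nd : d%:R / N%:R * (N%:R / d%:R) = 1 :> C by rewrite -invf_div mulVf ?gt_eqF ?Nd_gt0.
split => [[_ _ _ [c psi_c]] | [c Gc_]].
  exists (d%:R / N%:R * sqrtC c) => i j ij.
  have -> : G i j = d%:R / N%:R * dotv (psi i) (psi j) by rewrite dot_psi mulrA dN_Nd mul1r.
  by rewrite normrM ger0_norm ?divr_ge0 // -(psi_c i j ij) sqrCK.
split => //.
- by move=> i; rewrite dot_psi G_diag mulrC dN_Nd.
- split; first exact: psi_frame.
  by exists (N%:R / d%:R); split; [exact: Nd_gt0 | exact: psi_tight].
by exists ((N%:R / d%:R * c) ^+ 2) => i j ij; rewrite dot_psi normrM ger0_norm ?ltW ?Nd_gt0 // Gc_.
Qed.

End ObliqueDualFrame.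

Theorem theorem3p5 (R : realType) (n N : nat) (W V : 'M[R[i]]_n)
  (w v : 'I_N -> 'cV[R[i]]_n) (Pw Pv Sd Sh : 'M[R[i]]_n) :
  (2 <= N)%N ->
  (0 < \rank W)%N ->
  direct_sum_perp W V ->
  oblique_proj W V Pw ->
  oblique_proj V W Pv ->
  is_frame W w ->
  is_MP_inverse (frame_op w) Sd ->
  is_psd Sh -> Sh *m Sh = Sd ->
  oblique_dual V Pw w v ->
  (forall i j, dotv (w i) (v i) = dotv (w j) (v j)) ->
  let d := \rank W in
  let G := mixed_gram w v in
  let b := d%:R * (N%:R - d%:R) / (N%:R ^+ 2 * (N%:R - 1)) : R[i] in
  b <= max_offdiag_sq G /\
  (max_offdiag_sq G = b <->
     (exists c : R[i], forall i j, i != j -> `|G i j| = c) /\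
     (forall j, v j = Pv *m Sd *m w j)) /\
  (max_offdiag_sq G = b <->
     exists Q : 'M[R[i]]_N, gen_signature Q /\
       G = (d%:R / N%:R) *: (1%:M + sqrtC ((N%:R - d%:R) / (d%:R * (N%:R - 1))) *: Q)) /\
  (max_offdiag_sq G = b <->
     is_ETF d W (fun k => sqrtC (N%:R / d%:R) *: (Sh *m w k)) /\
     (forall j, v j = Pv *m Sd *m w j)).
Proof.
move=> N_gt1 W_neq0 WV Pw_proj Pv_proj w_frame Sd_pinv [Sh_herm _] Sh_sq v_dual diag_const d G b.
have G_idem : G *m G = G := mixed_gram_idem WV Pw_proj w_frame v_dual.
have G_diag i j : G i i = G j j by rewrite !mxE (diag_const i j).
have rkG : \rank G = d := rank_mixed_gram WV Pw_proj w_frame v_dual.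
have Gd := diag_idem_const N_gt1 G_idem G_diag; rewrite rkG in Gd.
have welch_le := welch_bound_le N_gt1 G_idem G_diag; rewrite rkG in welch_le.
have welch_const := max_offdiag_sq_eq_welch_const N_gt1 G_idem G_diag; rewrite rkG in welch_const.
have welch_sqrt := max_offdiag_sq_eq_welch_sqrt N_gt1 G_idem G_diag; rewrite rkG in welch_sqrt.
have t_ge0 := sqrt_welch_ratio_ge0 G N_gt1; rewrite rkG in t_ge0.
have herm_canonical : adjmx G = G <-> forall j, v j = Pv *m Sd *m w j.
  apply: iff_trans (mixed_gram_herm_iff WV Pw_proj w_frame v_dual Sd_pinv Sh_herm Sh_sq) _.
  exact: mixed_gram_canonical_iff WV Pv_proj w_frame v_dual Sh_herm Sh_sq.
have psi_ETF := psi_ETF_iff WV Pw_proj w_frame v_dual Sd_pinv Sh_herm Sh_sq W_neq0.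
have signature := @gen_signature_decomp_iff _ _ G _ _ (divr_ge0 (ler0n _ d) (ler0n _ N)) t_ge0 Gd.
split; first exact: welch_le.
split; last split.
- split => [/welch_const [/herm_canonical v_can [c Gc]] | [[c Gc] /herm_canonical G_herm]].
    by split; first exists c.
  by apply/welch_const; split; last exists c.
- by apply: iff_trans (welch_sqrt W_neq0) (iff_sym signature).
split => [/welch_const [G_herm G_const] | [G_ETF /herm_canonical G_herm]].
  by split; [exact/(psi_ETF G_herm Gd) | exact/herm_canonical].
by apply/welch_const; split; last exact/(psi_ETF G_herm Gd).
Qed.
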